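(* Let $\Bbbk$ be a field, $n\ge2$, $q\in\Bbbk$ a primitive $n$-th root of unity, $C_n=\langle g\rangle$ the cyclic group of order $n$ and $A$ a unital associative $\Bbbk$-algebra. Let $\cdot:\Bbbk C_n\otimes A\to A$ be a partial action of $\Bbbk C_n$ on $A$. Then for each $w\in A$ such that $g^i\cdot w=q^{-i}(g^i\cdot1_A)w$ for all $0\le i\le n-1$, one has $$g^i\cdot\big(w^\ell(g^j\cdot a)w^k\big)=q^{-i(\ell+k)}(g^i\cdot1_A)w^\ell(g^{i+j}\cdot a)w^k$$ for all $a\in A$, $\ell,k\ge0$ and $0\le i,j\le n-1$; in particular $g^i\cdot w^k=q^{-ik}(g^i\cdot1_A)w^k$. Moreover, if the partial action is symmetric, then $g^i\cdot(w^\ell(g^j\cdot a)w^k)=q^{-i(\ell+k)}w^\ell(g^{i+j}\cdot a)w^k(g^i\cdot1_A)$.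
   Context: $\Bbbk C_n$ is the group Hopf algebra with $g$ group-like; exponents of $g$ are read modulo $n$. A partial action of a bialgebra $H$ on $A$ is a linear map $\cdot:H\otimes A\to A$ with $1_H\cdot a=a$, $h\cdot(ab)=(h_1\cdot a)(h_2\cdot b)$, $h\cdot(k\cdot a)=(h_1\cdot1_A)(h_2k\cdot a)$; it is symmetric if moreover $h\cdot(k\cdot a)=(h_1k\cdot a)(h_2\cdot1_A)$. *)

From HB Require Import structures.
From mathcomp Require Import all_boot all_order all_algebra.
Set Implicit Arguments. Unset Strict Implicit. Unset Printing Implicit Defensive.
Import GRing.Theory.
Local Open Scope ring_scope.

(* A linear map  k C_n (x) A -> A  is determined by (and determines) the family
   of linear maps  act i := (g^i . _) : A -> A.  We index by i : nat and read
   exponents of g modulo n, i.e. act is n-periodic. Since every element of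
   k C_n is a linear combination of the group-likes g^i (with Delta g^i =
   g^i (x) g^i), the partial action axioms for all h, k in k C_n are
   equivalent (by bilinearity) to the axioms on the basis g^i, g^j. *)

Definition is_partial_action (K : fieldType) (A : algType K) (n : nat)
  (act : nat -> A -> A) : Prop :=
  [/\ (forall i a, act (i + n)%N a = act i a),               (* g^n = 1 *)
      (forall i (c : K) (x y : A), act i (c *: x + y) = c *: act i x + act i y),
      (forall a, act 0%N a = a),
      (forall i a b, act i (a * b) = act i a * act i b) &
      (forall i j a, act i (act j a) = act i 1 * act (i + j)%N a)].

Definition is_symmetric_partial_action (K : fieldType) (A : algType K) (n : nat)
  (act : nat -> A -> A) : Prop :=
  is_partial_action n act /\
  (forall i j a, act i (act j a) = act (i + j)%N a * act i 1).

From HB Require Import structures.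
From mathcomp Require Import all_boot all_order all_algebra.
Import GRing.Theory.

Set Implicit Arguments.
Unset Strict Implicit.
Unset Printing Implicit Defensive.

Local Open Scope ring_scope.

(* Multiplicativity makes [g^i . 1] a right unit for every [g^i . x], so the
   partial action axiom becomes [g^i . (x (g^j . a)) = (g^i . x)(g^(i+j) . a)],
   and the hypothesis on [w] becomes [g^i . (x w) = q^-i (g^i . x) w]; iterating
   these two rules gives the formula.  In the symmetric case [g^i . 1] is
   central: comparing both axioms on [g^i . (g^((n-1)i) . x)], where
   [g^(ni) . x = x], gives [(g^i . 1) x = x (g^i . 1)].  Nothing about [q] is used: [q^-i] may be any
   scalar. *)

Section PartialActionProducts.

Variables (K : fieldType) (A : algType K) (act : nat -> A -> A).
Hypothesis act_mul : forall i a b, act i (a * b) = act i a * act i b.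
Hypothesis act_comp : forall i j a, act i (act j a) = act i 1 * act (i + j)%N a.

Lemma act_mul_act1 i x : act i x * act i 1 = act i x.
Proof. by rewrite -act_mul mulr1. Qed.

Lemma act_mul_act i j x a : act i (x * act j a) = act i x * act (i + j)%N a.
Proof. by rewrite act_mul act_comp mulrA act_mul_act1. Qed.

Section SemiInvariant.

Variables (i : nat) (c : K) (w : A).
Hypothesis act_w : act i w = c *: (act i 1 * w).

Lemma act_mulr_semi_invariant x : act i (x * w) = c *: (act i x * w).
Proof. by rewrite act_mul act_w -scalerAr mulrA act_mul_act1. Qed.

Lemma act_mulr_semi_invariant_expr x k :
  act i (x * w ^+ k) = c ^+ k *: (act i x * w ^+ k).
Proof.
elim: k => [|k IHk]; first by rewrite !mulr1 scale1r.
by rewrite exprSr mulrA act_mulr_semi_invariant IHk -scalerAl scalerA -exprS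
  mulrA.
Qed.

Lemma act_semi_invariant_expr k : act i (w ^+ k) = c ^+ k *: (act i 1 * w ^+ k).
Proof. by rewrite -[in LHS](mul1r (w ^+ k)) act_mulr_semi_invariant_expr. Qed.

Lemma act_semi_invariant_sandwich j a l k :
  act i (w ^+ l * act j a * w ^+ k)
  = c ^+ (l + k) *: (act i 1 * w ^+ l * act (i + j)%N a * w ^+ k).
Proof.
rewrite act_mulr_semi_invariant_expr act_mul_act act_semi_invariant_expr.
by rewrite -!scalerAl scalerA -exprD addnC.
Qed.

End SemiInvariant.

End PartialActionProducts.

Section SymmetricPartialAction.

Variables (K : fieldType) (A : algType K) (n : nat) (act : nat -> A -> A).
Hypothesis n_gt0 : (0 < n)%N.
Hypothesis act_period : forall i a, act (i + n)%N a = act i a.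
Hypothesis act0 : forall a, act 0%N a = a.
Hypothesis act_comp : forall i j a, act i (act j a) = act i 1 * act (i + j)%N a.
Hypothesis act_comp_sym : forall i j a, act i (act j a) = act (i + j)%N a * act i 1.

Lemma act_muln_period m a : act (m * n)%N a = a.
Proof. by elim: m => [|m IHm]; rewrite ?act0 // mulSn addnC act_period. Qed.

Lemma act1_central i x : act i 1 * x = x * act i 1.
Proof.
have i_inv : (i + i * n.-1)%N = (i * n)%N by rewrite addnC -mulnSr prednK.
by rewrite -[x in LHS](act_muln_period i) -[x in RHS](act_muln_period i)
  -i_inv -act_comp act_comp_sym.
Qed.

End SymmetricPartialAction.

Lemma exprVn_mul (K : fieldType) (q : K) i m : q ^- (i * m) = (q ^- i) ^+ m.
Proof. by rewrite exprM exprVn. Qed.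

Theorem corollary3p6 (K : fieldType) (A : algType K) (n : nat) (q : K)
  (act : nat -> A -> A) :
  (2 <= n)%N -> n.-primitive_root q -> is_partial_action n act ->
  forall w : A,
    (forall i : nat, (i < n)%N -> act i w = q ^- i *: (act i 1 * w)) ->
    (forall (a : A) (l k i j : nat), (i < n)%N -> (j < n)%N ->
       act i (w ^+ l * act j a * w ^+ k)
       = q ^- (i * (l + k)) *: (act i 1 * w ^+ l * act (i + j)%N a * w ^+ k))
    /\ (forall k i : nat, (i < n)%N ->
       act i (w ^+ k) = q ^- (i * k) *: (act i 1 * w ^+ k))
    /\ (is_symmetric_partial_action n act ->
       forall (a : A) (l k i j : nat), (i < n)%N -> (j < n)%N ->
       act i (w ^+ l * act j a * w ^+ k)
       = q ^- (i * (l + k)) *: (w ^+ l * act (i + j)%N a * w ^+ k * act i 1)).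
Proof.
move=> n_ge2 _ [act_period _ act0 act_mul act_comp] w act_w.
have sandwich a l k i j : (i < n)%N ->
    act i (w ^+ l * act j a * w ^+ k)
    = q ^- (i * (l + k)) *: (act i 1 * w ^+ l * act (i + j)%N a * w ^+ k).
  by move=> lt_i_n; rewrite exprVn_mul
    (act_semi_invariant_sandwich act_mul act_comp (act_w i lt_i_n)).
split; [by move=> a l k i j lt_i_n _; apply: sandwich | split].
  by move=> k i lt_i_n; rewrite exprVn_mul
    (act_semi_invariant_expr act_mul (act_w i lt_i_n)).
move=> [_ act_comp_sym] a l k i j lt_i_n _.
have n_gt0 : (0 < n)%N by apply: leq_trans n_ge2.
rewrite sandwich //; congr (_ *: _).
by rewrite -!mulrA (act1_central n_gt0 act_period act0 act_comp act_comp_sym)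
  !mulrA.
Qed.
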